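(* Let $n_\text{in}\ge1$, $\mathbf{W}\in\mathbb{R}^{2\times n_\text{in}}$ with rows $\mathbf{W}_{1,:},\mathbf{W}_{2,:}$, $\mathbf{b}\in\mathbb{R}^{2}$, $\mathbf{c}\in\mathbb{R}^{n_\text{in}}$, $\mathbf{U}=[\mathbf{u}_1\,\ldots\,\mathbf{u}_{n_\text{in}}]\in\mathbb{R}^{n_\text{in}\times n_\text{in}}$, and $\mathcal{P}(\mathbf{U})=\{\mathbf{c}+\sum_j\lambda_j\mathbf{u}_j:\lambda\in[0,1]^{n_\text{in}}\}$. For $i\ge1$, let $N=2^i$ and partition $\mathcal{P}(\mathbf{U})$ (obtained by $i$ rounds of bisecting every cell along $\mathbf{u}_1$ with ratio $r=\tfrac12$) into the cells $\mathcal{P}_k=\{\mathbf{c}+\tfrac{k}{N}\mathbf{u}_1+\lambda_1\tfrac1N\mathbf{u}_1+\sum_{j\ge2}\lambda_j\mathbf{u}_j:\lambda\in[0,1]^{n_\text{in}}\}$, $k=0,\ldots,N-1$. Let $\mathcal{P}(\mathbf{V})$ and $\mathcal{P}(\mathbf{V}_k)$ be the images of $\mathcal{P}(\mathbf{U})$ and $\mathcal{P}_k$ under $\mathbf{x}\mapsto\mathbf{W}\mathbf{x}+\mathbf{b}$, and let $R_i=\mathrm{Vol}(\mathcal{B}(\mathbf{V}))-\mathrm{Vol}\big(\bigcup_{k=0}^{N-1}\mathcal{B}(\mathbf{V}_k)\big)$. Then \[ \lim_{i\to\infty}R_i=|\mathbf{W}_{1,:}\mathbf{u}_1|\,|\mathbf{W}_{2,:}\mathbf{u}_1|.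 \]
   Context: For a parallelotope $\mathcal{P}\subset\mathbb{R}^{2}$, $\mathcal{B}(\cdot)$ denotes the smallest axis-aligned rectangle containing it (the Cartesian product over coordinates of the interval between the minimal and maximal coordinate of its vertices); $\mathrm{Vol}$ is Lebesgue area. *)

From HB Require Import structures.
From mathcomp Require Import all_boot all_order all_algebra.
From mathcomp Require Import all_classical all_reals all_analysis.
Set Implicit Arguments. Unset Strict Implicit. Unset Printing Implicit Defensive.
Import Order.TTheory GRing.Theory Num.Theory.
Local Open Scope classical_set_scope.
Local Open Scope ring_scope.

Definition parallelotope (R : realType) (d m : nat) (c : 'cV[R]_d) (G : 'M[R]_(d, m))
  : set 'cV[R]_d :=
  [set c + G *m lam | lam in [set lam : 'cV[R]_m | forall j, 0 <= lam j ord0 <= 1]].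

Definition pvertices (R : realType) (d m : nat) (c : 'cV[R]_d) (G : 'M[R]_(d, m))
  : set 'cV[R]_d :=
  [set c + G *m lam | lam in [set lam : 'cV[R]_m | forall j, lam j ord0 = 0 \/ lam j ord0 = 1]].

Definition bbox (R : realType) (m : nat) (c : 'cV[R]_2) (G : 'M[R]_(2, m)) : set (R * R) :=
  let X1 := [set v ord0 ord0 | v in pvertices c G] in
  let X2 := [set v ord_max ord0 | v in pvertices c G] in
  [set p : R * R | (inf X1 <= p.1 <= sup X1) /\ (inf X2 <= p.2 <= sup X2)].

Definition area (R : realType) : set (R * R) -> \bar R :=
  (@lebesgue_measure R \x @lebesgue_measure R)%E.

(* The k-th cell P_k after i bisections along u_1 (N = 2^i cells):
   offset c + (k/N) u_1, generators (u_1/N, u_2, ..., u_n). *)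
Definition cell_off (R : realType) (n : nat) (c : 'cV[R]_n.+1) (U : 'M[R]_n.+1)
  (N k : nat) : 'cV[R]_n.+1 :=
  c + (k%:R / N%:R) *: col ord0 U.
Definition cell_gen (R : realType) (n : nat) (U : 'M[R]_n.+1) (N : nat) : 'M[R]_n.+1 :=
  \matrix_(a, j) (if j == ord0 then U a j / N%:R else U a j).

(* R_i = Vol(B(V)) - Vol(\bigcup_k B(V_k)), where V = W U with offset W c + b is the
   image of P(U) under x |-> W x + b, and V_k likewise for P_k. *)
Definition Rgap (R : realType) (n : nat) (W : 'M[R]_(2, n.+1)) (b : 'cV[R]_2)
  (c : 'cV[R]_n.+1) (U : 'M[R]_n.+1) (i : nat) : \bar R :=
  let N := (2 ^ i)%N in
  (area (bbox (W *m c + b) (W *m U))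
   - area (\bigcup_(k < N) bbox (W *m cell_off c U N k + b) (W *m cell_gen U N)))%E.

From HB Require Import structures.
From mathcomp Require Import all_boot all_order all_algebra.
From mathcomp Require Import all_classical all_reals all_analysis.
From mathcomp Require Import ring lra.
Set Implicit Arguments. Unset Strict Implicit. Unset Printing Implicit Defensive.
Import Order.TTheory GRing.Theory Num.Theory.
Import numFieldNormedType.Exports.
Local Open Scope classical_set_scope.
Local Open Scope ring_scope.

(* Along each coordinate the bounding box of c + G [0,1]^m is an interval of
   length sum_j |G_rj|.  Hence B(V) is an |a| + s by |b| + t rectangle, where
   (a, b) = W u_1 and s, t collect the other generators, while the N cell boxes
   are translates of one (|a|/N + s) by (|b|/N + t) rectangle along the steps
   (a/N, b/N), consecutive ones overlapping in an s by t rectangle.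
   Inclusion-exclusion along this staircase gives the area of the union, and
   the gap is exactly |a| |b| (1 - 1/N). *)

Section staircase.
Variable R : realType.

Lemma lebesgue_measure_itvcc (a b : R) : a <= b ->
  lebesgue_measure `[a, b]%classic = (b - a)%:E.
Proof.
move=> ab; rewrite lebesgue_measure_itv /= lte_fin.
case: ltP => // ba; have -> : b = a by apply/eqP; rewrite eq_le ab ba.
by rewrite subrr.
Qed.

Lemma area_itvXitv (a b c d : R) : a <= b -> c <= d ->
  area (`[a, b]%classic `*` `[c, d]%classic) = ((b - a) * (d - c))%:E.
Proof.
move=> ab cd; rewrite /area product_measure1E; try exact: measurable_itv.
by rewrite EFinM; congr (_ * _)%E; exact: lebesgue_measure_itvcc.
Qed.

Lemma areaU (A B : set (measurableTypeR R * measurableTypeR R)%type) :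
  measurable A -> measurable B -> (area B < +oo)%E ->
  area (A `|` B) = (area A + area B - area (A `&` B))%E.
Proof. exact: measureUfinr. Qed.

Definition shifted_itv (x0 a w t : R) : set R :=
  `[x0 + t * a, x0 + t * a + w]%classic.

Lemma shifted_itvI_between x0 a w s t u : s <= t -> t <= u ->
  shifted_itv x0 a w s `&` shifted_itv x0 a w u `<=` shifted_itv x0 a w t.
Proof.
rewrite /shifted_itv => st tu x [] /=; rewrite !in_itv /= => /andP[? ?] /andP[? ?].
by apply/andP; split; case: (lerP 0 a) => ?; nra.
Qed.

Lemma shifted_itvIS x0 a w t : `|a| <= w ->
  shifted_itv x0 a w t `&` shifted_itv x0 a w (t + 1) =
  shifted_itv (x0 + Order.max a 0) a (w - `|a|) t.
Proof.
move=> aw; rewrite /shifted_itv; case: (lerP 0 a) => a0;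
  [rewrite (ger0_norm a0) in aw * | rewrite (ltr0_norm a0) in aw *];
  apply/seteqP; split => x /=; rewrite !in_itv /=.
1,3: by case=> /andP[? ?] /andP[? ?]; apply/andP; split; nra.
all: by move=> /andP[? ?]; split; apply/andP; split; nra.
Qed.

Definition stair_box x0 a w y0 b h (j : nat) : set (R * R) :=
  shifted_itv x0 a w j%:R `*` shifted_itv y0 b h j%:R.

Lemma bigcup_stair_boxI x0 a w y0 b h k :
  (\bigcup_(j < k.+1) stair_box x0 a w y0 b h j) `&` stair_box x0 a w y0 b h k.+1 =
  stair_box x0 a w y0 b h k `&` stair_box x0 a w y0 b h k.+1.
Proof.
apply/seteqP; split => p; last by case=> Bk Bk1; split => //; exists k => /=.
case=> [[j /= jk] [Bj1 Bj2] [Bk1 Bk2]]; split => //.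
by split; apply: (@shifted_itvI_between _ _ _ j%:R k%:R k.+1%:R); rewrite ?ler_nat.
Qed.

Lemma area_bigcup_stair_box x0 a w y0 b h k : `|a| <= w -> `|b| <= h ->
  area (\bigcup_(j < k.+1) stair_box x0 a w y0 b h j) =
  (w * h + k%:R * (w * h - (w - `|a|) * (h - `|b|)))%:E.
Proof.
move=> aw bh.
have mbox j : measurable (stair_box x0 a w y0 b h j).
  by apply: measurableX; exact: measurable_itv.
have abox j : area (stair_box x0 a w y0 b h j) = (w * h)%:E.
  rewrite area_itvXitv ?lerDl ?(le_trans _ aw) ?(le_trans _ bh) //.
  by congr _%:E; ring.
elim: k => [|k IH]; first by rewrite bigcup_mkord big_ord1 abox mul0r addr0.
rewrite bigcup_mkord big_ord_recr /= -bigcup_mkord areaU ?abox ?ltry //;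
  [|by rewrite bigcup_mkord; apply: bigsetU_measurable => j _; exact: mbox
   |exact: mbox].
rewrite bigcup_stair_boxI IH /stair_box -setXI -natr1 !shifted_itvIS //.
rewrite area_itvXitv ?lerDl ?subr_ge0 // -EFinD -?EFinB; congr _%:E; ring.
Qed.

End staircase.

Section bounding_box.
Variable R : realType.

Lemma sup_eq_ub_mem (E : set R) m : E m -> ubound E m -> sup E = m.
Proof.
move=> Em ub; apply/eqP; rewrite eq_le ge_sup ?ub_le_sup //; by exists m.
Qed.

Lemma inf_eq_lb_mem (E : set R) m : E m -> lbound E m -> inf E = m.
Proof.
move=> Em lb; rewrite /inf (@sup_eq_ub_mem _ (- m)) ?opprK //.
by move=> _ [x Ex <-]; rewrite lerN2; exact: lb.
Qed.

Lemma sup_pvertices_coord m (o : 'cV[R]_2) (G : 'M[R]_(2, m)) r :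
  sup [set v r ord0 | v in pvertices o G] = o r ord0 + \sum_j Order.max (G r j) 0.
Proof.
apply: sup_eq_ub_mem.
  pose lam := \col_j (if G r j < 0 then 0 else 1) : 'cV[R]_m.
  exists (o + G *m lam).
    by exists lam => // j; rewrite mxE; case: ifP; [left|right].
  rewrite !mxE; congr (_ + _); apply: eq_bigr => j _; rewrite mxE.
  by case: ltP; rewrite ?mulr0 ?mulr1.
move=> _ [_ [lam lam01 <-] <-]; rewrite !mxE lerD2l; apply: ler_sum => j _.
by case: (lam01 j) => ->; rewrite ?mulr0 ?mulr1 le_max lexx ?orbT.
Qed.

Lemma inf_pvertices_coord m (o : 'cV[R]_2) (G : 'M[R]_(2, m)) r :
  inf [set v r ord0 | v in pvertices o G] = o r ord0 + \sum_j Order.min (G r j) 0.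
Proof.
apply: inf_eq_lb_mem.
  pose lam := \col_j (if G r j < 0 then 1 else 0) : 'cV[R]_m.
  exists (o + G *m lam).
    by exists lam => // j; rewrite mxE; case: ifP; [right|left].
  rewrite !mxE; congr (_ + _); apply: eq_bigr => j _; rewrite mxE.
  by case: ltP; rewrite ?mulr0 ?mulr1.
move=> _ [_ [lam lam01 <-] <-]; rewrite !mxE lerD2l; apply: ler_sum => j _.
by case: (lam01 j) => ->; rewrite ?mulr0 ?mulr1 ge_min lexx ?orbT.
Qed.

Lemma maxr0_minr0D_norm (x : R) : Order.max x 0 = Order.min x 0 + `|x|.
Proof.
case: (lerP 0 x) => x0; first by rewrite ger0_norm // add0r.
by rewrite ltr0_norm // subrr.
Qed.

Definition bbox_low m (o : 'cV[R]_2) (G : 'M[R]_(2, m)) r :=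
  o r ord0 + \sum_j Order.min (G r j) 0.

Lemma bboxE m (o : 'cV[R]_2) (G : 'M[R]_(2, m)) :
  bbox o G =
  `[bbox_low o G ord0, bbox_low o G ord0 + \sum_j `|G ord0 j|]%classic `*`
  `[bbox_low o G ord_max, bbox_low o G ord_max + \sum_j `|G ord_max j|]%classic.
Proof.
have hi r : o r ord0 + \sum_j Order.max (G r j) 0 = bbox_low o G r + \sum_j `|G r j|.
  by rewrite -addrA -big_split; congr (_ + _); apply: eq_bigr => j _; exact: maxr0_minr0D_norm.
rewrite /bbox !sup_pvertices_coord !inf_pvertices_coord !hi.
by apply/seteqP; split => p /=; rewrite !in_itv /=.
Qed.

Lemma area_bbox m (o : 'cV[R]_2) (G : 'M[R]_(2, m)) :
  area (bbox o G) = ((\sum_j `|G ord0 j|) * \sum_j `|G ord_max j|)%:E.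
Proof.
rewrite bboxE area_itvXitv ?lerDl ?sumr_ge0 //.
by rewrite ![bbox_low o G _ + _]addrC !addrK.
Qed.

End bounding_box.

Section cells.
Variables (R : realType) (n : nat).
Variables (W : 'M[R]_(2, n.+1)) (b : 'cV[R]_2) (c : 'cV[R]_n.+1) (U : 'M[R]_n.+1).

Definition tail_width r := \sum_(j < n) `|(W *m U) r (lift ord0 j)|.

Lemma cell_gen_coord N r j : (W *m cell_gen U N) r j =
  if j == ord0 then (W *m U) r j / N%:R else (W *m U) r j.
Proof.
rewrite !mxE; case: ifP => j0; last by apply: eq_bigr => a _; rewrite mxE j0.
by rewrite mulr_suml; apply: eq_bigr => a _; rewrite mxE j0 mulrA.
Qed.

Lemma width_cell N r : (0 < N)%N ->
  \sum_j `|(W *m cell_gen U N) r j| = `|(W *m U) r ord0| / N%:R + tail_width r.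
Proof.
move=> N0; rewrite big_ord_recl cell_gen_coord eqxx normrM normfV normr_nat.
congr (_ + _); apply: eq_bigr => j _.
by rewrite cell_gen_coord eq_sym (negbTE (neq_lift _ _)).
Qed.

Lemma bbox_low_cell N k r :
  bbox_low (W *m cell_off c U N k + b) (W *m cell_gen U N) r =
  bbox_low (W *m c + b) (W *m cell_gen U N) r + k%:R * ((W *m U) r ord0 / N%:R).
Proof.
rewrite /bbox_low /cell_off mulmxDr -scalemxAr colE mulmxA -colE !mxE.
ring.
Qed.

Lemma bbox_cell N k :
  bbox (W *m cell_off c U N k + b) (W *m cell_gen U N) =
  stair_box
    (bbox_low (W *m c + b) (W *m cell_gen U N) ord0) ((W *m U) ord0 ord0 / N%:R)
    (\sum_j `|(W *m cell_gen U N) ord0 j|)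
    (bbox_low (W *m c + b) (W *m cell_gen U N) ord_max) ((W *m U) ord_max ord0 / N%:R)
    (\sum_j `|(W *m cell_gen U N) ord_max j|) k.
Proof. by rewrite bboxE !bbox_low_cell. Qed.

Lemma RgapE i : Rgap W b c U i =
  (`|(W *m U) ord0 ord0| * `|(W *m U) ord_max ord0| * (1 - (2 ^ i)%:R^-1))%:E.
Proof.
rewrite /Rgap; set N := (2 ^ i)%N.
have N0 : (0 < N)%N by rewrite expn_gt0.
have [N' eN] : exists N', N = N'.+1 by exists N.-1; rewrite prednK.
have step_norm r : `|(W *m U) r ord0 / N%:R| = `|(W *m U) r ord0| / N%:R.
  by rewrite normrM normfV normr_nat.
rewrite (eq_bigcupr (fun k _ => bbox_cell N k)) eN area_bigcup_stair_box
  -?eN ?width_cell ?step_norm ?lerDl ?sumr_ge0 //.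
rewrite area_bbox !big_ord_recl -!/(tail_width _) -EFinB eN -natr1.
by congr _%:E; field; rewrite natr1 pnatr_eq0.
Qed.

End cells.

Theorem lemma2 (R : realType) (n : nat) (W : 'M[R]_(2, n.+1)) (b : 'cV[R]_2)
  (c : 'cV[R]_n.+1) (U : 'M[R]_n.+1) :
  Rgap W b c U @ \oo -->
    ((`|(row ord0 W *m col ord0 U) ord0 ord0| *
      `|(row ord_max W *m col ord0 U) ord0 ord0|)%:E)%E.
Proof.
have rowcol r : (row r W *m col ord0 U) ord0 ord0 = (W *m U) r ord0.
  by rewrite !mxE; apply: eq_bigr => j _; rewrite !mxE.
rewrite !rowcol (funext (@RgapE _ _ W b c U)).
set K := `|(W *m U) ord0 ord0| * `|(W *m U) ord_max ord0|.
apply: cvg_EFin; first exact: nearW.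
suff : ((fun i => K * (1 - (2 ^ i)%:R^-1)) : R^nat) @ \oo --> K * (1 - 0).
  by rewrite subr0 mulr1.
apply: cvgM; first exact: cvg_cst.
apply: cvgB; first exact: cvg_cst.
under eq_fun do rewrite natrX -exprVn.
by apply: cvg_expr; rewrite gtr0_norm ?invr_gt0 // invf_lt1 // ltr1n.
Qed.
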